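(* Let $w\doteq\delta^n\tau_1^{u_1}\cdots\tau_t^{u_t}$ be a word in Xu normal form. Then the unique word in Garside normal form conjugate to $w$ is as follows (with $k\in\mathbb{Z}$): - $w\doteq\delta^{3k}$: $\Delta^{2k}$; - $w\doteq\delta^{3k+1}$: $\Delta^{2k}ab$; - $w\doteq\delta^{3k+2}$: $\Delta^{2k}a^3b$; - $w\doteq\delta^{3k}a^{u_1}$: $\Delta^{2k}a^{u_1}$; - $w\doteq\delta^{3k+1}a$: $\Delta^{2k}a^2b$; - $w\doteq\delta^{3k+2}a^{u_1}$: $\Delta^{2k+1}a^{1+u_1}$; - $t\geq 2$ (case (c) of the Xu normal form criterion): $\Delta^{(2n-t)/3}\sigma_1^{1+u_1}\sigma_2^{1+u_2}\cdots\sigma_t^{1+u_t}$.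
   Context: $B_3=\langle a,b\mid aba=bab\rangle$, $x=a^{-1}ba$, $\delta=ba$, $\Delta=aba$. For $i\in\mathbb{Z}$: $\tau_i=a,b,x$ according as $i\equiv1,2,0\pmod 3$; $\sigma_i=a$ if $i$ odd, $\sigma_i=b$ if $i$ even. A word $\delta^n\tau_1^{u_1}\cdots\tau_t^{u_t}$ ($n\in\mathbb{Z}$, $t\ge0$, $u_i\ge1$) is in Xu normal form if $(-n,t,u_1,\dots,u_t)$ is lexicographically minimal among all such words representing braids in the same conjugacy class. A word $\Delta^\ell\sigma_1^{p_1}\cdots\sigma_r^{p_r}$ with $\ell\in\mathbb{Z}$, $r\ge0$, $p_i\ge1$ is in Garside normal form if one of: (A) $\ell$ even and $r\in\{0,1\}$; (B) $\ell$ even, $r=2$, $p_1\in\{1,2,3\}$, $p_2=1$; (C)/(D) $r\ge1$, all $p_i\ge2$, $\ell\equiv r\pmod 2$, and $(p_1,\dots,p_r)$ lexicographically minimal among its cyclic permutations. Every conjugacy class of $B_3$ contains a unique word in Garside normal form. *)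

(* The braid group B_3 is modelled as words in a, b and their
   inverses, modulo the congruence generated by free cancellation and aba = bab. *)
From mathcomp Require Import all_boot all_order all_algebra.
Set Implicit Arguments. Unset Strict Implicit. Unset Printing Implicit Defensive.
Import GRing.Theory Num.Theory.

Inductive gen := GA | GB.

(* a letter: generator together with a flag "is inverted" *)
Definition letter := (gen * bool)%type.
Definition word := list letter.

Definition la : letter := (GA, false).
Definition lb : letter := (GB, false).
Definition linv (l : letter) : letter := (l.1, ~~ l.2).
Definition winv (w : word) : word := rev (map linv w).

Inductive rule : word -> word -> Prop :=
  | rule_cancel (l : letter) : rule [:: l; linv l] [::]
  | rule_braid : rule [:: la; lb; la] [:: lb; la; lb].

Inductive step : word -> word -> Prop :=
  | step_ctx (u v l r : word) : rule l r -> step (u ++ l ++ v) (u ++ r ++ v).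

Inductive beq : word -> word -> Prop :=
  | beq_step u v : step u v -> beq u v
  | beq_refl u : beq u u
  | beq_sym u v : beq u v -> beq v u
  | beq_trans u v w : beq u v -> beq v w -> beq u w.

Definition bconj (u v : word) : Prop := exists z : word, beq (z ++ u ++ winv z) v.

Definition wpown (w : word) (m : nat) : word := flatten (nseq m w).
Definition wpow (w : word) (n : int) : word :=
  match n with
  | Posz m => wpown w m
  | Negz m => wpown (winv w) m.+1
  end.

Definition wa : word := [:: la].
Definition wb : word := [:: lb].
Definition wx : word := winv wa ++ wb ++ wa.
Definition wdelta : word := wb ++ wa.
Definition wDelta : word := wa ++ wb ++ wa.

Definition tau (i : nat) : word :=
  if i %% 3 == 1 then wa else if i %% 3 == 2 then wb else wx.
Definition sigma (i : nat) : word := if odd i then wa else wb.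

Definition prodpow (f : nat -> word) (es : seq nat) : word :=
  flatten [seq wpown (f i.+1) (nth 0 es i) | i <- iota 0 (size es)].

Definition xu_word (n : int) (us : seq nat) : word := wpow wdelta n ++ prodpow tau us.
Definition garside_word (l : int) (ps : seq nat) : word := wpow wDelta l ++ prodpow sigma ps.

Fixpoint lexle (s t : seq nat) : bool :=
  match s, t with
  | [::], _ => true
  | _ :: _, [::] => false
  | x :: s', y :: t' => (x < y)%N || ((x == y) && lexle s' t')
  end.

(* (-n, t, u_1, ..., u_t) <=lex (-n', t', u'_1, ..., u'_t') *)
Definition xu_le (n : int) (us : seq nat) (n' : int) (us' : seq nat) : Prop :=
  (- n < - n')%R \/
  (n = n' /\ ((size us < size us')%N \/ (size us = size us' /\ lexle us us'))).

Definition pos_exps (es : seq nat) : bool := all (fun u => 0 < u)%N es.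

Definition xu_normal (n : int) (us : seq nat) : Prop :=
  pos_exps us /\
  forall (n' : int) (us' : seq nat), pos_exps us' ->
    bconj (xu_word n us) (xu_word n' us') -> xu_le n us n' us'.

Definition int_odd (l : int) : bool := odd `|l|%N.

Definition garside_normal (l : int) (ps : seq nat) : Prop :=
  pos_exps ps /\
  [\/ (~~ int_odd l /\ (size ps <= 1)%N),
      (~~ int_odd l /\ exists p1, ps = [:: p1; 1%N] /\ p1 \in [:: 1; 2; 3]%N) |
      [/\ (1 <= size ps)%N, all (fun p => 2 <= p)%N ps,
          int_odd l = odd (size ps)
        & forall i, (i < size ps)%N -> lexle ps (rot i ps)]].

From mathcomp Require Import all_boot all_order all_algebra.
From mathcomp Require Import zify.
From Stdlib Require Import Setoid Morphisms.
Import GRing.Theory Num.Theory.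
Set Implicit Arguments. Unset Strict Implicit.
Local Open Scope ring_scope.

(* Braids are words modulo the congruence [beq]; we first make [beq] a setoid
   congruence for concatenation, inversion and powers, and record the braid
   identities that drive everything:  tau_c delta = delta tau_(c+1),
   tau_(c+1) tau_c = delta,  sigma_j Delta = Delta sigma_(j+1)  and
   delta^3 = Delta^2, which is central.

   For t <= 1 the Garside form is obtained by an explicit conjugation.  For
   t >= 2 Xu-minimality is exploited twice.  Write n = 3q + r.
   - A normalisation procedure (merging adjacent equal letters, replacing
     tau_(c+1) tau_c by delta) turns any  delta^n * (product of tau-powers)
     into a Xu word with exponent at least n.  Cycling the last block of w to
     the front therefore yields a smaller Xu word unless  r + t = 0 (mod 3).
   - Under that congruence every cyclic rotation of (u_1,...,u_t) gives a
     conjugate Xu word, so (u_1,...,u_t) is lexicographically least among its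
     rotations.
   Finally  tau_i = delta^(1-i) a delta^(i-1)  and  delta^-1 = b Delta^-1
   rewrite w, up to conjugacy, as  Delta^l sigma_1^(1+u_1) ... sigma_t^(1+u_t)
   with 3l = 2n - t, which satisfies clause (C)/(D) of Garside normality. *)

Notation "u =b v" := (beq u v) (at level 70).

Lemma beq_catl x u v : u =b v -> x ++ u =b x ++ v.
Proof.
elim=> {u v} [u v [u' v' l r rl]|u|u v _ IH|u v w _ IH1 _ IH2].
- by apply: beq_step; have := step_ctx (x ++ u') v' rl; rewrite -!catA.
- exact: beq_refl.
- exact: beq_sym.
- exact: beq_trans IH2.
Qed.

Lemma beq_catr y u v : u =b v -> u ++ y =b v ++ y.
Proof.
elim=> {u v} [u v [u' v' l r rl]|u|u v _ IH|u v w _ IH1 _ IH2].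
- by apply: beq_step; have := step_ctx u' (v' ++ y) rl; rewrite -!catA.
- exact: beq_refl.
- exact: beq_sym.
- exact: beq_trans IH2.
Qed.

#[export] Instance beq_Equivalence : Equivalence beq.
Proof. split; [exact: beq_refl | move=> ??; exact: beq_sym | move=> ???; exact: beq_trans]. Qed.

#[export] Instance cat_Proper : Proper (beq ==> beq ==> beq) (@cat letter).
Proof. by move=> u u' Hu v v' Hv; apply: beq_trans (beq_catr v Hu) (beq_catl u' Hv). Qed.

#[export] Hint Resolve beq_refl : core.

Lemma rule_beq l r : rule l r -> l =b r.
Proof. by move=> H; apply: beq_step; have := step_ctx [::] [::] H; rewrite /= !cats0. Qed.

Lemma cancel_linv l : [:: l; linv l] =b [::].
Proof. exact/rule_beq/rule_cancel. Qed.

Lemma braid_aba : [:: la; lb; la] =b [:: lb; la; lb].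
Proof. exact/rule_beq/rule_braid. Qed.

Lemma linvK l : linv (linv l) = l.
Proof. by case: l => g []. Qed.

Lemma winvK w : winv (winv w) = w.
Proof. by rewrite /winv map_rev revK -map_comp; elim: w => //= l w ->; rewrite linvK. Qed.

Lemma winv_cat u v : winv (u ++ v) = winv v ++ winv u.
Proof. by rewrite /winv map_cat rev_cat. Qed.

Lemma winv_r w : w ++ winv w =b [::].
Proof.
elim: w => [|l w IH] //=.
rewrite /winv /= rev_cons -cats1 -/(winv w).
have -> : l :: w ++ winv w ++ [:: linv l] = [:: l] ++ (w ++ winv w) ++ [:: linv l] by rewrite catA.
by rewrite IH; exact: cancel_linv.
Qed.

Lemma winv_l w : winv w ++ w =b [::].
Proof. by have := winv_r (winv w); rewrite winvK. Qed.

Lemma cat_winvK u v : u ++ v ++ winv v =b u.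
Proof. by rewrite winv_r cats0. Qed.

Lemma cat_winvVK u v : u ++ winv v ++ v =b u.
Proof. by rewrite winv_l cats0. Qed.

Lemma winv_catK u v : winv u ++ u ++ v =b v.
Proof. by rewrite catA winv_l. Qed.

#[export] Instance winv_Proper : Proper (beq ==> beq) winv.
Proof.
move=> u v H.
transitivity (winv u ++ v ++ winv v); first by rewrite cat_winvK.
transitivity (winv u ++ u ++ winv v); first exact/beq_catl/beq_catr/beq_sym.
exact: winv_catK.
Qed.

Lemma wpownS w m : wpown w m.+1 = w ++ wpown w m.
Proof. by []. Qed.

Lemma wpownD w m k : wpown w (m + k) = wpown w m ++ wpown w k.
Proof. by elim: m => [|m IH] //=; rewrite addSn !wpownS IH catA. Qed.

Lemma wpown1 w : wpown w 1 = w.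
Proof. by rewrite wpownS cats0. Qed.

Lemma wpownSr w m : wpown w m.+1 = wpown w m ++ w.
Proof. by rewrite -addn1 wpownD wpown1. Qed.

Lemma wpownM w m k : wpown w (m * k) = wpown (wpown w m) k.
Proof. by elim: k => [|k IH]; rewrite ?muln0 // mulnS wpownD IH. Qed.

Lemma winv_wpown w m : winv (wpown w m) = wpown (winv w) m.
Proof. by elim: m => [|m IH] //; rewrite wpownS winv_cat IH -wpownSr. Qed.

#[export] Instance wpown_Proper : Proper (beq ==> eq ==> beq) wpown.
Proof. by move=> u v H m _ <-; elim: m => [|m IH] //; rewrite !wpownS IH H. Qed.

#[export] Instance wpow_Proper : Proper (beq ==> eq ==> beq) wpow.
Proof. by move=> u v H [] m _ <- /=; rewrite H. Qed.

Lemma wpowNn w (m : nat) : wpow w (- m%:Z) = wpown (winv w) m.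
Proof. by case: m => [|m] //; rewrite NegzE. Qed.

Lemma wpowS w a : wpow w (a + 1) =b wpow w a ++ w.
Proof.
case: a => [m|[|m]].
- have -> : Posz m + 1 = Posz m.+1 by lia.
  by rewrite /= wpownSr.
- by rewrite /= wpown1 winv_l.
- have -> : Negz m.+1 + 1 = Negz m by rewrite !NegzE; lia.
  by rewrite /= (wpownSr (winv w) m.+1) -catA winv_l cats0.
Qed.

Lemma wpowDn w a (m : nat) : wpow w (a + m%:Z) =b wpow w a ++ wpown w m.
Proof.
elim: m => [|m IH]; first by rewrite addr0 /= cats0.
have -> : a + m.+1%:Z = (a + m) + 1 by lia.
by rewrite wpowS IH wpownSr catA.
Qed.

Lemma wpowBn w a (m : nat) : wpow w (a - m%:Z) =b wpow w a ++ wpown (winv w) m.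
Proof.
elim: m => [|m IH]; first by rewrite subr0 /= cats0.
transitivity (wpow w (a - m.+1%:Z + 1) ++ winv w); first by rewrite wpowS -catA cat_winvK.
have -> : a - m.+1%:Z + 1 = a - m%:Z by lia.
by rewrite IH wpownSr catA.
Qed.

Lemma wpowD w a b : wpow w (a + b) =b wpow w a ++ wpow w b.
Proof. by case: b => m; [exact: wpowDn | rewrite NegzE wpowBn /= -wpowNn]. Qed.

Lemma wpowM w (c : nat) k : wpow w (c%:Z * k) = wpow (wpown w c) k.
Proof.
case: k => m; first by rewrite -PoszM /= wpownM.
have -> : c%:Z * Negz m = - (c * m.+1)%N%:Z by rewrite NegzE; lia.
by rewrite wpowNn /= wpownM winv_wpown.
Qed.

Definition comm (x y : word) : Prop := x ++ y =b y ++ x.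

Lemma comm_sym x y : comm x y -> comm y x.
Proof. by rewrite /comm => ->. Qed.

Lemma comm_cat x1 x2 y : comm x1 y -> comm x2 y -> comm (x1 ++ x2) y.
Proof. by rewrite /comm => H1 H2; rewrite -catA H2 !catA H1. Qed.

Lemma comm_winv x y : comm x y -> comm (winv x) y.
Proof.
rewrite /comm => H.
transitivity (winv x ++ y ++ x ++ winv x); first by rewrite cat_winvK.
by rewrite (catA y) -H catA winv_catK.
Qed.

Lemma comm_wpow x y k : comm x y -> comm (wpow x k) y.
Proof.
have comm_wpown x' m : comm x' y -> comm (wpown x' m) y.
  by move=> H; elim: m => [|m IH]; [rewrite /comm cats0 | exact: comm_cat].
by case: k => m H; apply: comm_wpown => //; exact: comm_winv.
Qed.

Lemma comm_letters x : (forall l, comm [:: l] x) -> forall z, comm z x.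
Proof.
move=> Hl; elim=> [|l z IH]; first by rewrite /comm cats0.
by rewrite -cat1s; exact: comm_cat.
Qed.

Lemma a_Delta : wa ++ wDelta =b wDelta ++ wb.
Proof. exact: (beq_catl [:: la] braid_aba). Qed.

Lemma b_Delta : wb ++ wDelta =b wDelta ++ wa.
Proof. exact: (beq_catr [:: la] (beq_sym braid_aba)). Qed.

Lemma sigma_Delta j : sigma j ++ wDelta =b wDelta ++ sigma j.+1.
Proof. by rewrite /sigma /=; case: (odd j); [exact: a_Delta | exact: b_Delta]. Qed.

Lemma conj_winv x y D : x ++ D =b D ++ y -> winv D ++ x =b y ++ winv D.
Proof.
move=> H.
transitivity (winv D ++ x ++ D ++ winv D); first by rewrite cat_winvK.
by rewrite (catA x) H -catA winv_catK.
Qed.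

Lemma sigma_Delta_inv j : winv wDelta ++ sigma j =b sigma j.+1 ++ winv wDelta.
Proof. exact/conj_winv/sigma_Delta. Qed.

Lemma Delta2_central z : comm z (wpown wDelta 2).
Proof.
have sigma_comm j : comm (sigma j) (wpown wDelta 2).
  have -> : sigma j = sigma j.+2 by rewrite /sigma /= negbK.
  rewrite /comm (wpownSr _ 1) wpown1 catA sigma_Delta -catA sigma_Delta catA.
  by rewrite /sigma /= negbK.
apply: comm_letters => -[[] [|]].
- exact: (comm_winv (sigma_comm 1%N)).
- exact: (sigma_comm 1%N).
- exact: (comm_winv (sigma_comm 2%N)).
- exact: (sigma_comm 2%N).
Qed.

Lemma Delta_even_central k z : comm (wpow wDelta (2%:Z * k)) z.
Proof. by rewrite wpowM; apply/comm_wpow/comm_sym/Delta2_central. Qed.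

Lemma delta3_Delta2 q : wpow wdelta (3%:Z * q) =b wpow wDelta (2%:Z * q).
Proof.
have E : wpown wdelta 3 =b wpown wDelta 2.
  exact: (beq_catr [:: la; lb; la] (beq_sym braid_aba)).
by rewrite !wpowM E.
Qed.

Lemma bconj_beq u v : u =b v -> bconj u v.
Proof. by move=> H; exists [::]; rewrite /= cats0. Qed.

Lemma bconj_refl u : bconj u u.
Proof. exact: bconj_beq. Qed.

Lemma bconj_trans u v w : bconj u v -> bconj v w -> bconj u w.
Proof.
move=> [z1 H1] [z2 H2]; exists (z2 ++ z1).
by rewrite winv_cat -!catA -H2 -H1 !catA.
Qed.

Lemma bconj_sym u v : bconj u v -> bconj v u.
Proof.
move=> [z H]; exists (winv z); rewrite winvK -H.
by rewrite !catA winv_l /= -catA cat_winvVK.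
Qed.

#[export] Instance bconj_Proper : Proper (beq ==> beq ==> iff) bconj.
Proof.
move=> u u' Hu v v' Hv; split => C.
- apply: bconj_trans (bconj_beq (beq_sym Hu)) (bconj_trans C (bconj_beq Hv)).
- apply: bconj_trans (bconj_beq Hu) (bconj_trans C (bconj_beq (beq_sym Hv))).
Qed.

Lemma bconj_rot x y : bconj (x ++ y) (y ++ x).
Proof. by exists (winv x); rewrite winvK -catA winv_catK. Qed.

Lemma bconj_central D x y : (forall z, comm D z) -> bconj (D ++ x ++ y) (D ++ y ++ x).
Proof.
move=> HD; rewrite catA (HD x) -catA.
by apply: bconj_trans (bconj_rot _ _) _; rewrite -catA; exact: bconj_refl.
Qed.

Lemma tau_mod c c' : (c %% 3 = c' %% 3)%N -> tau c = tau c'.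
Proof. by rewrite /tau => ->. Qed.

Lemma tau_cases c : [\/ tau c = tau 0 /\ tau c.+1 = tau 1,
                        tau c = tau 1 /\ tau c.+1 = tau 2 |
                        tau c = tau 2 /\ tau c.+1 = tau 3].
Proof.
have : (c %% 3 < 3)%N by rewrite ltn_mod.
by case E: (c %% 3)%N => [|[|[|i]]] // _; [apply: Or31 | apply: Or32 | apply: Or33];
   split; apply: tau_mod; lia.
Qed.

Lemma cancel_ctx u v l : u ++ [:: l; linv l] ++ v =b u ++ v.
Proof. by rewrite cancel_linv. Qed.

Lemma cancel_ctx' u v l : u ++ [:: linv l; l] ++ v =b u ++ v.
Proof. by have := cancel_ctx u v (linv l); rewrite linvK. Qed.

Lemma tau_delta c : tau c ++ wdelta =b wdelta ++ tau c.+1.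
Proof.
case: (tau_cases c) => -[-> ->]; rewrite /= /wx /wdelta /wa /wb /=.
- transitivity ([:: linv la; la] ++ [:: lb; la; la]); last exact: cancel_ctx' [::] _ la.
  exact: (beq_catl [:: linv la] (beq_catr [:: la] (beq_sym braid_aba))).
- exact: braid_aba.
- by symmetry; exact: (cancel_ctx [:: lb] [:: lb; la] la).
Qed.

Lemma tau_pair c : tau c.+1 ++ tau c =b wdelta.
Proof.
case: (tau_cases c) => -[-> ->]; rewrite /= /wx /wdelta /wa /wb /=.
- exact: (cancel_ctx [::] [:: lb; la] la).
- by [].
- transitivity ([:: linv la; la] ++ [:: lb; la]); last exact: cancel_ctx' [::] _ la.
  exact: (beq_catl [:: linv la] (beq_sym braid_aba)).
Qed.

Lemma winv_delta : winv wdelta =b wb ++ winv wDelta.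
Proof.
rewrite -(conj_winv a_Delta).
by have -> : winv wDelta = winv wdelta ++ winv wa by []; rewrite -catA cat_winvVK.
Qed.

Fixpoint powprod (f : nat -> word) (j : nat) (es : seq nat) : word :=
  if es is e :: es' then wpown (f j) e ++ powprod f j.+1 es' else [::].

Lemma prodpow_powprod f es : prodpow f es = powprod f 1 es.
Proof.
suff shifted j : flatten [seq wpown (f (j + i).+1) (nth 0%N es i) | i <- iota 0 (size es)]
                 = powprod f j.+1 es by apply: (shifted 0%N).
elim: es j => [|e es IH] j //=; rewrite addn0; congr (_ ++ _).
rewrite -(IH j.+1) -(addn0 1%N) iotaDl -map_comp; congr flatten.
by apply: eq_map => i /=; rewrite addnS addSn.
Qed.

Lemma powprod_rcons f j s x : powprod f j (rcons s x) = powprod f j s ++ wpown (f (j + size s)%N) x.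
Proof. by elim: s j => [|y s IH] j /=; rewrite ?addn0 ?cats0 // IH addSnnS catA. Qed.

Lemma powprod_mod j j' us : (j %% 3 = j' %% 3)%N -> powprod tau j us = powprod tau j' us.
Proof.
elim: us j j' => [|u us IH] j j' H //=.
by rewrite (tau_mod H) (IH j.+1 j'.+1) //; lia.
Qed.

Lemma taupow_delta c e : wpown (tau c) e ++ wdelta =b wdelta ++ wpown (tau c.+1) e.
Proof.
elim: e => [|e IH]; first by rewrite /= ?cats0.
by rewrite !wpownS -catA IH catA tau_delta -catA.
Qed.

Lemma powprod_delta j us : powprod tau j us ++ wdelta =b wdelta ++ powprod tau j.+1 us.
Proof.
elim: us j => [|u us IH] j; first by rewrite /= ?cats0.
by rewrite /= -catA IH catA taupow_delta -catA.
Qed.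

Lemma taupow_wpow n q (r : nat) c e : n = 3%:Z * q + r%:Z ->
  wpown (tau c) e ++ wpow wdelta n =b wpow wdelta n ++ wpown (tau (c + r)) e.
Proof.
move=> ->; rewrite wpowD delta3_Delta2 catA -(Delta_even_central q) -!catA.
apply: beq_catl; rewrite [wpow _ r%:Z]/=; elim: r c => [|r IH] c; first by rewrite addn0 /= cats0.
by rewrite wpownS catA taupow_delta -catA IH catA addnS -addSn.
Qed.

Lemma bconj_shift n j us :
  bconj (wpow wdelta n ++ powprod tau j us) (wpow wdelta n ++ powprod tau j.+1 us).
Proof.
exists (winv wdelta); rewrite winvK -(catA _ _ wdelta) powprod_delta (catA (wpow wdelta n)).
have -> : wpow wdelta n ++ wdelta =b wdelta ++ wpow wdelta n by apply/comm_wpow.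
by rewrite -!catA winv_catK.
Qed.

Lemma bconj_shiftk n j k us :
  bconj (wpow wdelta n ++ powprod tau j us) (wpow wdelta n ++ powprod tau (j + k) us).
Proof.
elim: k => [|k IH]; first by rewrite addn0; exact: bconj_refl.
by apply: bconj_trans IH _; rewrite addnS; exact: bconj_shift.
Qed.

Definition blocks (bl : seq (nat * nat)) : word :=
  flatten [seq wpown (tau p.1) p.2 | p <- bl].

Lemma blocks_cons c e bl : blocks ((c, e) :: bl) = wpown (tau c) e ++ blocks bl.
Proof. by []. Qed.

Lemma blocks_cat b1 b2 : blocks (b1 ++ b2) = blocks b1 ++ blocks b2.
Proof. by rewrite /blocks map_cat flatten_cat. Qed.

Definition shift_blocks (bl : seq (nat * nat)) : seq (nat * nat) :=
  [seq (p.1.+1, p.2) | p <- bl].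

Lemma blocks_delta bl : blocks bl ++ wdelta =b wdelta ++ blocks (shift_blocks bl).
Proof.
elim: bl => [|p bl IH]; first by rewrite /= ?cats0.
by rewrite /= -catA IH catA taupow_delta -catA.
Qed.

Fixpoint xu_blocks (j : nat) (us : seq nat) : seq (nat * nat) :=
  if us is u :: us' then (j, u) :: xu_blocks j.+1 us' else [::].

Lemma blocks_xu j us : blocks (xu_blocks j us) = powprod tau j us.
Proof. by elim: us j => [|u us IH] j //=; rewrite -IH. Qed.

Fixpoint consecutive (j : nat) (bl : seq (nat * nat)) : bool :=
  if bl is p :: bl' then (p.1 %% 3 == j %% 3)%N && consecutive j.+1 bl' else true.

Lemma consecutive_powprod j bl : consecutive j bl -> blocks bl = powprod tau j (map snd bl).
Proof.
elim: bl j => [|[c e] bl IH] j //= /andP[/eqP Hc Hbl].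
by rewrite blocks_cons (tau_mod Hc) (IH j.+1 Hbl).
Qed.

Lemma not_consecutive_split bl j c e : (c %% 3 = j %% 3)%N -> ~~ consecutive j ((c, e) :: bl) ->
  exists pre c1 e1 c2 e2 post,
    (c, e) :: bl = pre ++ (c1, e1) :: (c2, e2) :: post /\ (c2 %% 3 != c1.+1 %% 3)%N.
Proof.
elim: bl j c e => [|[c' e'] bl IH] j c e /= Hc; rewrite Hc eqxx //= => Hn.
case E: (c' %% 3 == j.+1 %% 3)%N.
- have [pre [c1 [e1 [c2 [e2 [post [H1 H2]]]]]]] := IH j.+1 c' e' (eqP E) Hn.
  by exists ((c, e) :: pre), c1, e1, c2, e2, post; rewrite H1.
- exists [::], c, e, c', e', bl; split => //.
  by move/negbT: E; lia.
Qed.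

(* Total length of a block word plus its number of blocks: decreases under
   every normalisation step. *)
Definition blocks_size (bl : seq (nat * nat)) : nat := (sumn (map snd bl) + size bl)%N.

Lemma blocks_size_cat b1 b2 : blocks_size (b1 ++ b2) = (blocks_size b1 + blocks_size b2)%N.
Proof. by rewrite /blocks_size map_cat sumn_cat size_cat; lia. Qed.

Lemma blocks_size_shift bl : blocks_size (shift_blocks bl) = blocks_size bl.
Proof. by rewrite /blocks_size /shift_blocks -map_comp size_map. Qed.

Definition nonempty_blocks (bl : seq (nat * nat)) : seq (nat * nat) :=
  [seq p <- bl | (0 < p.2)%N].

Lemma blocks_nonempty bl : blocks (nonempty_blocks bl) = blocks bl.
Proof. by elim: bl => [|[c [|e]] bl IH] //; rewrite /= ?blocks_cons IH. Qed.

Lemma blocks_size_nonempty bl : (blocks_size (nonempty_blocks bl) <= blocks_size bl)%N.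
Proof. by rewrite /blocks_size; elim: bl => [|[c [|e]] bl IH] //=; lia. Qed.

(* Replacing  tau_(c+1) tau_c  by delta and moving it to the front. *)
Lemma blocks_reduce n pre c1 e1 c2 e2 post : tau c1 = tau c2.+1 ->
  wpow wdelta n ++ blocks (pre ++ (c1, e1.+1) :: (c2, e2.+1) :: post) =b
  wpow wdelta (n + 1) ++ blocks (shift_blocks (pre ++ [:: (c1, e1)]) ++ (c2, e2) :: post).
Proof.
move=> Ht.
have Epre : blocks pre ++ wpown (tau c1) e1 = blocks (pre ++ [:: (c1, e1)]).
  by rewrite blocks_cat blocks_cons [blocks [::]]/= cats0.
rewrite blocks_cat !blocks_cons wpownSr wpownS Ht.
transitivity (wpow wdelta n ++ (blocks pre ++ wpown (tau c1) e1) ++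
              (tau c2.+1 ++ tau c2) ++ wpown (tau c2) e2 ++ blocks post).
  by rewrite -!catA -Ht.
by rewrite tau_pair Epre (catA (blocks _)) blocks_delta wpowS blocks_cat blocks_cons -!catA.
Qed.

Lemma blocks_merge pre c1 e1 c2 e2 post : tau c1 = tau c2 ->
  blocks (pre ++ (c1, e1) :: (c2, e2) :: post) = blocks (pre ++ (c1, (e1 + e2)%N) :: post).
Proof. by move=> Ht; rewrite !blocks_cat !blocks_cons Ht wpownD !catA. Qed.

Lemma consecutive_xu n c bl : consecutive c bl ->
  bconj (wpow wdelta n ++ blocks bl) (xu_word n (map snd bl)).
Proof.
move=> Hc; rewrite (consecutive_powprod Hc) /xu_word prodpow_powprod.
have [k Hk] : exists k, ((c + k) %% 3 = 1 %% 3)%N by exists (4 - c %% 3)%N; lia.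
by rewrite -(powprod_mod _ Hk); exact: bconj_shiftk.
Qed.

(* One normalisation step on a non-consecutive word with nonempty blocks:
   merge two equal letters, or trade  tau_(c+1) tau_c  for a delta. *)
Lemma blocks_step n c e r : all (fun p => 0 < p.2)%N ((c, e) :: r) ->
  ~~ consecutive c ((c, e) :: r) ->
  exists n' bl', [/\ n <= n', (blocks_size bl' < blocks_size ((c, e) :: r))%N &
    wpow wdelta n ++ blocks ((c, e) :: r) =b wpow wdelta n' ++ blocks bl'].
Proof.
move=> Hpos /(not_consecutive_split (erefl (c %% 3)%N)).
move=> [pre [c1 [e1 [c2 [e2 [post [Esplit Hc]]]]]]].
move: Hpos; rewrite {}Esplit all_cat /= => /andP[_ /and3P[He1 He2 _]].
have [Heq|Hneq] := eqVneq (c2 %% 3)%N (c1 %% 3)%N.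
- exists n, (pre ++ (c1, (e1 + e2)%N) :: post); split => //.
  + by rewrite !blocks_size_cat /blocks_size /=; lia.
  + by rewrite blocks_merge //; apply: tau_mod.
- case: e1 e2 He1 He2 => [|e1] [|e2] // _ _.
  exists (n + 1), (shift_blocks (pre ++ [:: (c1, e1)]) ++ (c2, e2) :: post); split.
  + by lia.
  + by rewrite !blocks_size_cat blocks_size_shift blocks_size_cat /blocks_size /=; lia.
  + by apply: blocks_reduce; apply: tau_mod; lia.
Qed.

Lemma normalise bl n :
  exists n' us', [/\ pos_exps us', n <= n' &
    bconj (wpow wdelta n ++ blocks bl) (xu_word n' us')].
Proof.
have [N] := ubnP (blocks_size bl); elim: N bl n => [|N IHN] bl n // Hsize.
rewrite -blocks_nonempty.
have Hsize' := leq_ltn_trans (blocks_size_nonempty bl) Hsize.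
have Hpos : all (fun p => 0 < p.2)%N (nonempty_blocks bl) by exact: filter_all.
case: (nonempty_blocks bl) Hsize' Hpos => [|[c e] r] Hsize' Hpos.
  by exists n, [::]; split => //; rewrite /xu_word prodpow_powprod /=; exact: bconj_refl.
have [Hc|Hnc] := boolP (consecutive c ((c, e) :: r)).
  exists n, (map snd ((c, e) :: r)); split => //; last exact: consecutive_xu Hc.
  by rewrite /pos_exps all_map.
have [n1 [bl1 [Hn1 Hsize1 Hbeq]]] := blocks_step n Hpos Hnc.
have [n' [us' [Hus' Hn' Hconj]]] := IHN bl1 n1 ltac:(lia).
by exists n', us'; split; [done | lia | rewrite Hbeq].
Qed.

Lemma xu_le_contra n us n' us' : xu_le n us n' us' ->
  n < n' \/ (n = n' /\ (size us' < size us)%N) -> False.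
Proof. by case=> [H|[Hn [H|[H _]]]] [H'|[Hn' H']]; lia. Qed.

Lemma xu_cycle_last n q (r : nat) s x : n = 3%:Z * q + r%:Z ->
  bconj (xu_word n (rcons s x))
        (wpow wdelta n ++ wpown (tau ((size s).+1 + r)) x ++ powprod tau 1 s).
Proof.
move=> Hn; rewrite /xu_word prodpow_powprod powprod_rcons (catA (wpow wdelta n)).
apply: bconj_trans (bconj_rot _ _) _.
by rewrite catA (taupow_wpow _ _ Hn) -catA add1n; exact: bconj_refl.
Qed.

Lemma xu_cycle_conj n q (r : nat) s x : n = 3%:Z * q + r%:Z ->
  ((r + (size s).+1) %% 3 = 0)%N -> bconj (xu_word n (rcons s x)) (xu_word n (x :: s)).
Proof.
move=> Hn H3; apply: bconj_trans (xu_cycle_last _ _ Hn) _.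
have -> : tau ((size s).+1 + r) = tau 0 by apply: tau_mod; lia.
by rewrite /xu_word prodpow_powprod; exact: (bconj_shift n 0 (x :: s)).
Qed.

Lemma xu_rot_conj n q (r : nat) us : n = 3%:Z * q + r%:Z ->
  ((r + size us) %% 3 = 0)%N ->
  forall i, (i <= size us)%N -> bconj (xu_word n us) (xu_word n (rot i us)).
Proof.
move=> Hn H3; elim=> [|i IH] Hi; first by rewrite rot0; exact: bconj_refl.
apply: bconj_trans (IH (ltnW Hi)) _; rewrite rotS //.
case E: (rot i us) => [|x s]; first exact: bconj_refl.
have Hsize : (size s).+1 = size us by rewrite -(size_rot i us) E.
by rewrite rot1_cons; apply: bconj_sym; apply: (xu_cycle_conj _ Hn); rewrite Hsize.
Qed.

(* Otherwise cycling the last block to the front either merges it with the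
   first block (fewer blocks) or creates a factor  tau_2 tau_1 = delta
   (larger delta-exponent). *)
Lemma xu_normal_mod3 n us q (r : nat) : xu_normal n us -> (2 <= size us)%N ->
  n = 3%:Z * q + r%:Z -> ((r + size us) %% 3 = 0)%N.
Proof.
move=> [Hpos Hmin] Ht Hn.
case: (lastP us) Hpos Hmin Ht => [|s x] //; case: s => [|u1 mid] // Hpos Hmin _.
have [Hu1 Hx Hmid] : [/\ (0 < u1)%N, (0 < x)%N & pos_exps mid].
  by move: Hpos; rewrite /pos_exps /= all_rcons => /and3P[-> -> ->].
have Hcycle := xu_cycle_last (u1 :: mid) x Hn.
rewrite size_rcons /=; set c := ((size mid).+2 + r)%N in Hcycle.
have : ((r + (size mid).+2) %% 3 < 3)%N by rewrite ltn_mod.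
case E: ((r + (size mid).+2) %% 3)%N => [|[|[|]]] // _; exfalso.
- have Hc : tau c = tau 1 by apply: tau_mod; rewrite /c; lia.
  apply: (xu_le_contra (Hmin n ((x + u1)%N :: mid) _ _)).
  + by rewrite /pos_exps /= -/(pos_exps mid) Hmid andbT; lia.
  + apply: bconj_trans Hcycle _.
    by rewrite Hc /xu_word prodpow_powprod /= wpownD -catA; exact: bconj_refl.
  + by right; split => //; rewrite /= size_rcons.
- have Hc : tau c = tau 2 by apply: tau_mod; rewrite /c; lia.
  have Eblocks : wpown (tau c) x ++ powprod tau 1 (u1 :: mid) =
                 blocks ([::] ++ (c, x) :: (1%N, u1) :: xu_blocks 2 mid).
    by rewrite cat0s !blocks_cons blocks_xu.
  have Hred := blocks_reduce n [::] x.-1 u1.-1 (xu_blocks 2 mid) Hc.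
  rewrite (prednK Hx) (prednK Hu1) in Hred.
  rewrite Eblocks Hred in Hcycle.
  have [n' [us' [Hus' Hn' Hconj]]] := normalise
    (shift_blocks ([::] ++ [:: (c, x.-1)]) ++ (1%N, u1.-1) :: xu_blocks 2 mid) (n + 1).
  apply: (xu_le_contra (Hmin n' us' Hus' _)); last by left; lia.
  exact: bconj_trans Hcycle Hconj.
Qed.

(* Second consequence of Xu minimality: under r + t = 0 (mod 3) every
   rotation of the exponent sequence is again a conjugate Xu word, so the
   sequence is lexicographically least among its rotations. *)
Lemma xu_normal_rot_min n us q (r : nat) : xu_normal n us -> n = 3%:Z * q + r%:Z ->
  ((r + size us) %% 3 = 0)%N -> forall i, (i < size us)%N -> lexle us (rot i us).
Proof.
move=> [Hpos Hmin] Hn H3 i Hi.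
have Hpos_rot : pos_exps (rot i us).
  by rewrite /pos_exps (perm_all _ (introT permPl (perm_rot i us))).
have := Hmin n (rot i us) Hpos_rot (xu_rot_conj Hn H3 (ltnW Hi)).
by rewrite /xu_le size_rot => -[|[_ [|[]]]] //; lia.
Qed.

Lemma lexle_mapS s s' : lexle (map S s) (map S s') = lexle s s'.
Proof. by elim: s s' => [|x s IH] [|y s'] //=; rewrite ltnS eqSS IH. Qed.

Definition a_delta_word (us : seq nat) : word := flatten [seq wpown wa u ++ winv wdelta | u <- us].

(* tau_i = delta^(1-i) a delta^(i-1). *)
Lemma powprod_tau_a us : powprod tau 1 us =b a_delta_word us ++ wpown wdelta (size us).
Proof.
elim: us => [|u us IH] //=.
have Hshift : powprod tau 2 us =b winv wdelta ++ powprod tau 1 us ++ wdelta.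
  by rewrite powprod_delta winv_catK.
by rewrite Hshift IH /a_delta_word /= -!catA (wpownSr wdelta).
Qed.

Fixpoint sigma_word (j : nat) (us : seq nat) : word :=
  if us is u :: us' then wpown (sigma j) u ++ sigma j.+1 ++ sigma_word j.+1 us' else [::].

Lemma sigmapow_Delta_inv j u :
  winv wDelta ++ wpown (sigma j) u =b wpown (sigma j.+1) u ++ winv wDelta.
Proof.
elim: u => [|u IH]; first by rewrite /= ?cats0.
by rewrite !wpownS catA sigma_Delta_inv -catA IH catA.
Qed.

Lemma sigma_word_Delta_inv j us :
  winv wDelta ++ sigma_word j us =b sigma_word j.+1 us ++ winv wDelta.
Proof.
elim: us j => [|u us IH] j; first by rewrite /= ?cats0.
rewrite ![sigma_word _ (u :: us)]/= catA sigmapow_Delta_inv -catA.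
rewrite (catA (winv wDelta)) sigma_Delta_inv -catA.
by rewrite IH -!catA.
Qed.

(* delta^-1 = b Delta^-1, then all the Delta^-1 are collected on the right. *)
Lemma a_delta_sigma us : a_delta_word us =b sigma_word 1 us ++ wpown (winv wDelta) (size us).
Proof.
elim: us => [|u us IH] //=.
rewrite /a_delta_word /= -/(a_delta_word us) IH winv_delta -!catA.
by apply: beq_catl; apply: beq_catl; rewrite catA sigma_word_Delta_inv -catA.
Qed.

Lemma sigma_word_cons j u us : sigma_word j (u :: us) =
  wpown (sigma j) u ++ powprod sigma j.+1 (map S us) ++ sigma (j + size us).+1.
Proof.
elim: us j u => [|v us IH] j u /=; first by rewrite addn0 cats0.
by have := IH j.+1 v; rewrite [sigma_word _ (v :: _)]/= => ->; rewrite -!catA addSnnS.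
Qed.

Lemma sigma_Delta_pow j l : sigma j ++ wpow wDelta l =b wpow wDelta l ++ sigma (j + `|l|).
Proof.
have push D (HD : forall j, sigma j ++ D =b D ++ sigma j.+1) k :
    forall j, sigma j ++ wpown D k =b wpown D k ++ sigma (j + k).
  elim: k => [|k IH] j'; first by rewrite addn0 /= ?cats0.
  by rewrite wpownS catA HD -catA IH catA addnS -addSn.
case: l => m /=; first exact: push sigma_Delta m j.
apply: push; move=> j'; have -> : sigma j' = sigma j'.+2 by rewrite /sigma /= negbK.
by symmetry; apply: sigma_Delta_inv.
Qed.

Lemma odd_absz (x : int) (t : nat) (y : int) : x + t%:Z = 2%:Z * y -> odd `|x|%N = odd t.
Proof.
move=> H; have : (`|x| %% 2 = t %% 2)%N by lia.
by rewrite !modn2; case: (odd _); case: (odd t).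
Qed.

Lemma xu_garside_conj n u us q (r s : nat) :
  n = 3%:Z * q + r%:Z -> (r + (size us).+1 = 3 * s)%N ->
  bconj (xu_word n (u :: us))
        (garside_word (2%:Z * q + 2%:Z * s%:Z - (size us).+1%:Z) (map S (u :: us))).
Proof.
move=> Hn Hs; set t := (size us).+1; set l := 2%:Z * q + 2%:Z * s%:Z - t%:Z.
rewrite /xu_word prodpow_powprod powprod_tau_a a_delta_sigma -/t.
apply: bconj_trans (bconj_rot _ _) _.
have -> : wpown wdelta t = wpow wdelta t%:Z by [].
rewrite -(catA _ (wpow wdelta t)) -wpowD.
have -> : t%:Z + n = 3%:Z * (q + s%:Z) by rewrite Hn; lia.
rewrite delta3_Delta2 -wpowNn -(catA (sigma_word 1 _)) -wpowD.
have -> : - t%:Z + 2%:Z * (q + s%:Z) = l by rewrite /l; lia.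
apply: bconj_trans (bconj_rot _ _) _.
rewrite sigma_word_cons !catA.
apply: bconj_trans (bconj_rot _ _) _.
rewrite !catA sigma_Delta_pow.
have -> : sigma ((1 + size us).+1 + `|l|) = wa.
  have Hl : odd `|l|%N = odd t by apply: (@odd_absz l t (q + s%:Z)); rewrite /l; lia.
  by rewrite /sigma add1n -/t oddD Hl /=; case: (odd (size us)).
by rewrite /garside_word prodpow_powprod /= -!catA; exact: bconj_refl.
Qed.

Lemma int_odd_even k : ~~ int_odd (2 * k).
Proof. by rewrite /int_odd (@odd_absz _ 0 k) //; lia. Qed.

Lemma garside_normal_A k ps : pos_exps ps -> (size ps <= 1)%N -> garside_normal (2 * k) ps.
Proof. by move=> Hpos Hsize; split => //; apply: Or31; rewrite int_odd_even. Qed.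

Lemma garside_normal_B k p : p \in [:: 1; 2; 3]%N -> garside_normal (2 * k) [:: p; 1]%N.
Proof.
move=> Hp; split; last by apply: Or32; split; [exact: int_odd_even | exists p].
by move: Hp; rewrite !inE /pos_exps /= => /or3P[] /eqP ->.
Qed.

Lemma garside_normal_C l ps : (1 <= size ps)%N -> all (fun p => 2 <= p)%N ps ->
  int_odd l = odd (size ps) -> (forall i, (i < size ps)%N -> lexle ps (rot i ps)) ->
  garside_normal l ps.
Proof.
move=> Hsize Hps Hodd Hrot; split; last exact: Or33.
by apply: sub_all Hps => p /=; case: p.
Qed.

Lemma xu_word_split k (r : nat) us :
  xu_word (3%:Z * k + r%:Z) us =b wpow wDelta (2%:Z * k) ++ wpown wdelta r ++ prodpow tau us.
Proof. by rewrite /xu_word wpowD delta3_Delta2 -catA. Qed.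

Lemma conj_delta3k n k : n = 3 * k -> bconj (xu_word n [::]) (garside_word (2 * k) [::]).
Proof.
move=> Hn; have -> : n = 3%:Z * k + 0%:Z by lia.
by rewrite xu_word_split /garside_word /= cats0; exact: bconj_refl.
Qed.

(* Delta^(2k) (ba) ~ Delta^(2k) (ab). *)
Lemma conj_delta3k1 n k : n = 3 * k + 1 ->
  bconj (xu_word n [::]) (garside_word (2 * k) [:: 1; 1]%N).
Proof.
move=> Hn; have -> : n = 3%:Z * k + 1%:Z by lia.
rewrite xu_word_split /garside_word /=.
exact: (bconj_central [:: lb] [:: la] (Delta_even_central k)).
Qed.

(* Delta^(2k) (ba)(ba) ~ Delta^(2k) a(bab) = Delta^(2k) (aab)a ~ Delta^(2k) aaab. *)
Lemma conj_delta3k2 n k : n = 3 * k + 2 ->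
  bconj (xu_word n [::]) (garside_word (2 * k) [:: 3; 1]%N).
Proof.
move=> Hn; have -> : n = 3%:Z * k + 2%:Z by lia.
rewrite xu_word_split /garside_word /=.
apply: bconj_trans (bconj_central [:: lb] [:: la; lb; la] (Delta_even_central k)) _.
have Hbraid : [:: la; lb; la] ++ [:: lb] =b [:: la; la; lb] ++ [:: la].
  exact: (beq_catl [:: la] (beq_sym braid_aba)).
rewrite Hbraid.
exact: (bconj_central [:: la; la; lb] [:: la] (Delta_even_central k)).
Qed.

Lemma conj_delta3k_a n k u : n = 3 * k ->
  bconj (xu_word n [:: u]) (garside_word (2 * k) [:: u]).
Proof.
move=> Hn; have -> : n = 3%:Z * k + 0%:Z by lia.
by rewrite xu_word_split /garside_word /=; exact: bconj_refl.
Qed.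

(* Delta^(2k) (ba) a ~ Delta^(2k) aab. *)
Lemma conj_delta3k1_a n k : n = 3 * k + 1 ->
  bconj (xu_word n [:: 1%N]) (garside_word (2 * k) [:: 2; 1]%N).
Proof.
move=> Hn; have -> : n = 3%:Z * k + 1%:Z by lia.
rewrite xu_word_split /garside_word /=.
exact: (bconj_central [:: lb] [:: la; la] (Delta_even_central k)).
Qed.

(* Here even equality holds:  Delta^(2k) (ba)(ba) a^u = Delta^(2k+1) a^(1+u). *)
Lemma conj_delta3k2_a n k u : n = 3 * k + 2 ->
  bconj (xu_word n [:: u]) (garside_word (2 * k + 1) [:: u.+1]).
Proof.
move=> Hn; have -> : n = 3%:Z * k + 2%:Z by lia.
have -> : 2 * k + 1 = 2%:Z * k + 1%:Z by lia.
apply: bconj_beq; rewrite xu_word_split /garside_word wpowD -catA !prodpow_powprod /=.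
exact: (beq_catl _ (beq_catr (la :: wpown wa u ++ [::]) (beq_sym braid_aba))).
Qed.

Lemma garside_form_long n us : xu_normal n us -> (2 <= size us)%N ->
  exists l : int, 2%:Z * n - (size us)%:Z = 3%:Z * l /\
    garside_normal l [seq u.+1 | u <- us] /\
    bconj (xu_word n us) (garside_word l [seq u.+1 | u <- us]).
Proof.
move=> Hx Ht; have [Hpos _] := Hx.
set q := (n %/ 3)%Z; set r := `|(n %% 3)%Z|%N.
have Hn : n = 3%:Z * q + r%:Z by rewrite /q /r; lia.
have H3 := xu_normal_mod3 Hx Ht Hn.
have [s Hs] : exists s, (r + size us = 3 * s)%N by exists ((r + size us) %/ 3)%N; lia.
case: us Hx Hpos Ht H3 Hs => [|u us] // Hx Hpos _ H3 Hs.
exists (2%:Z * q + 2%:Z * s%:Z - (size us).+1%:Z); split; first by move: Hs => /=; lia.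
split; last exact: xu_garside_conj Hn Hs.
apply: garside_normal_C => //.
- by move: Hpos; rewrite /pos_exps !all_map => /allP Hu; apply/allP => x /Hu.
- by rewrite size_map /int_odd; apply: (@odd_absz _ _ (q + s%:Z)); move: Hs => /=; lia.
- move=> i; rewrite size_map => Hi.
  by rewrite -map_rot lexle_mapS; exact: xu_normal_rot_min Hx Hn H3 i Hi.
Qed.

Unset Implicit Arguments.

Theorem lemma2p7 (n : int) (us : seq nat) :
  xu_normal n us ->
  let t := size us in
  let u1 := nth 0%N us 0 in
  (* w = delta^(3k) *)
  (forall k : int, t = 0%N -> n = 3 * k ->
     garside_normal (2 * k) [::] /\ bconj (xu_word n us) (garside_word (2 * k) [::])) /\
  (* w = delta^(3k+1) *)
  (forall k : int, t = 0%N -> n = 3 * k + 1 ->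
     garside_normal (2 * k) [:: 1; 1]%N /\
     bconj (xu_word n us) (garside_word (2 * k) [:: 1; 1]%N)) /\
  (* w = delta^(3k+2) *)
  (forall k : int, t = 0%N -> n = 3 * k + 2 ->
     garside_normal (2 * k) [:: 3; 1]%N /\
     bconj (xu_word n us) (garside_word (2 * k) [:: 3; 1]%N)) /\
  (* w = delta^(3k) a^u1 *)
  (forall k : int, t = 1%N -> n = 3 * k ->
     garside_normal (2 * k) [:: u1] /\ bconj (xu_word n us) (garside_word (2 * k) [:: u1])) /\
  (* w = delta^(3k+1) a *)
  (forall k : int, t = 1%N -> u1 = 1%N -> n = 3 * k + 1 ->
     garside_normal (2 * k) [:: 2; 1]%N /\
     bconj (xu_word n us) (garside_word (2 * k) [:: 2; 1]%N)) /\
  (* w = delta^(3k+2) a^u1 *)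
  (forall k : int, t = 1%N -> n = 3 * k + 2 ->
     garside_normal (2 * k + 1) [:: u1.+1] /\
     bconj (xu_word n us) (garside_word (2 * k + 1) [:: u1.+1])) /\
  (* t >= 2 *)
  ((2 <= t)%N ->
     exists l : int, 2 * n - t%:Z = 3 * l /\
       garside_normal l [seq u.+1 | u <- us] /\
       bconj (xu_word n us) (garside_word l [seq u.+1 | u <- us])).
Proof.
move=> Hx t u1; rewrite {}/t {}/u1; have [Hpos _] := Hx.
have single : size us = 1%N -> exists u, us = [:: u] /\ (0 < u)%N.
  by move: Hpos; case: (us) => [|u [|]] //= /andP[Hu _] _; exists u.
split; [|split; [|split; [|split; [|split; [|split]]]]].
- move=> k /size0nil -> Hn; split; [exact: garside_normal_A | exact: conj_delta3k].
- move=> k /size0nil -> Hn; split; [exact: garside_normal_B | exact: conj_delta3k1].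
- move=> k /size0nil -> Hn; split; [exact: garside_normal_B | exact: conj_delta3k2].
- move=> k /single[u [-> Hu]] Hn.
  by split; [apply: garside_normal_A => //=; rewrite andbT | exact: conj_delta3k_a].
- move=> k /single[u [-> _]] /= -> Hn.
  split; [exact: garside_normal_B | exact: conj_delta3k1_a].
- move=> k /single[u [-> Hu]] Hn; split; last exact: conj_delta3k2_a.
  apply: garside_normal_C => //=; first by rewrite andbT.
  + rewrite /int_odd (@odd_absz _ 1 (k + 1)) //; lia.
  + by case=> [|i] //= _; rewrite eqxx orbT.
- move=> Ht; have [l [Hl H]] := garside_form_long Hx Ht.
  by exists l; split => //; lia.
Qed.
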